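(* A preordered group $(G,P_G)$ is a commutative object of the (unital) category $\mathsf{PreOrdGrp}$ if and only if $G$ is abelian. Consequently, the category $\mathsf{ComMon}(\mathsf{PreOrdGrp})$ of internal commutative monoids in $\mathsf{PreOrdGrp}$ coincides with $\mathsf{PreOrdAb}$.
   Context: A preordered group is a pair $(G,P_G)$ with $G$ an additively written group and $P_G\subseteq G$ a submonoid closed under conjugation; morphisms are group homomorphisms $f$ with $f(P_G)\subseteq P_H$. This is $\mathsf{PreOrdGrp}$; products are $(G\times H,P_G\times P_H)$. $\mathsf{PreOrdAb}$ is the full subcategory with $G$ abelian. $\mathsf{PreOrdGrp}$ is a unital category (pointed, finitely complete, and for all $X,Y$ the pair $l_X=\langle 1_X,0\rangle\colon X\to X\times Y$, $r_Y=\langle 0,1_Y\rangle\colon Y\to X\times Y$ is jointly strongly epimorphic). In a unital category an object $X$ is commutative if there is a morphism $\phi\colon X\times X\to X$ with $\phi\circ l_X=1_X=\phi\circ r_X$; in a unital category, the commutative objects form exactly the full subcategory of internal commutative monoids. *)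

(* A (not necessarily abelian) additively written group G together with a
   positive cone P_G : a submonoid closed under conjugation. *)
Record preOrdGrp := PreOrdGrp {
  carrier :> Type;
  add : carrier -> carrier -> carrier;
  zero : carrier;
  opp : carrier -> carrier;
  pos : carrier -> Prop;
  addA : forall x y z, add x (add y z) = add (add x y) z;
  add0g : forall x, add zero x = x;
  addg0 : forall x, add x zero = x;
  addNg : forall x, add (opp x) x = zero;
  addgN : forall x, add x (opp x) = zero;
  pos0 : pos zero;
  posD : forall x y, pos x -> pos y -> pos (add x y);
  posJ : forall a x, pos x -> pos (add (add a x) (opp a))
}.

Arguments add {p} _ _.
Arguments zero {p}.
Arguments opp {p} _.
Arguments pos {p} _.

Definition is_hom (G H : preOrdGrp) (f : G -> H) : Prop :=
  (forall x y : G, f (add x y) = add (f x) (f y)) /\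
  (forall x : G, pos x -> pos (f x)).

Definition prod_pog (G H : preOrdGrp) : preOrdGrp.
Proof.
refine (@PreOrdGrp (G * H)
  (fun u v => (add (fst u) (fst v), add (snd u) (snd v)))
  (zero, zero)
  (fun u => (opp (fst u), opp (snd u)))
  (fun u => pos (fst u) /\ pos (snd u)) _ _ _ _ _ _ _ _).
- intros [] [] []; simpl; rewrite !addA; reflexivity.
- intros []; simpl; rewrite !add0g; reflexivity.
- intros []; simpl; rewrite !addg0; reflexivity.
- intros []; simpl; rewrite !addNg; reflexivity.
- intros []; simpl; rewrite !addgN; reflexivity.
- simpl; split; apply pos0.
- intros [] [] [? ?] [? ?]; simpl in *; split; apply posD; assumption.
- intros [] [] [? ?]; simpl in *; split; apply posJ; assumption.
Defined.

Definition unit_pog : preOrdGrp.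
Proof.
refine (@PreOrdGrp unit (fun _ _ => tt) tt (fun _ => tt) (fun _ => True)
  _ _ _ _ _ _ _ _); try (intros; match goal with |- _ = _ => destruct x; reflexivity | _ => exact I end).
Defined.

Definition lX (X : preOrdGrp) : X -> prod_pog X X := fun x => (x, zero).
Definition rX (X : preOrdGrp) : X -> prod_pog X X := fun x => (zero, x).

Definition commutative_object (X : preOrdGrp) : Prop :=
  exists phi : prod_pog X X -> X,
    is_hom (prod_pog X X) X phi /\
    (forall x : X, phi (lX X x) = x) /\
    (forall x : X, phi (rX X x) = x).

(* Internal commutative monoid structure (m, e) on X in PreOrdGrp;
   the diagrams are checked pointwise (products are computed on carriers). *)
Definition internal_comm_monoid (X : preOrdGrp)
    (m : prod_pog X X -> X) (e : unit_pog -> X) : Prop :=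
  is_hom (prod_pog X X) X m /\ is_hom unit_pog X e /\
  (forall x y z : X, m (m (x, y), z) = m (x, m (y, z))) /\
  (forall x : X, m (e tt, x) = x) /\
  (forall x : X, m (x, e tt) = x) /\
  (forall x y : X, m (x, y) = m (y, x)).

Definition is_ComMon_object (X : preOrdGrp) : Prop :=
  exists m e, internal_comm_monoid X m e.

(* Objects of PreOrdAb. *)
Definition abelian (X : preOrdGrp) : Prop :=
  forall x y : X, add x y = add y x.


(* Eckmann-Hilton: a homomorphism phi : X x X -> X that is unital on both axes
   satisfies phi (x, y) = phi ((x, 0) + (0, y)) = x + y and symmetrically
   phi (x, y) = phi ((0, y) + (x, 0)) = y + x, so X is abelian.  Conversely, on
   an abelian X the addition is itself a homomorphism and gives the internal
   commutative monoid structure; its unit is forced to be 0 since a monoid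
   homomorphism out of the trivial group lands on an idempotent. *)

Lemma idempotent_is_zero (X : preOrdGrp) (a : X) : add a a = a -> a = zero.
Proof.
  intros Haa.
  assert (E : add (opp a) (add a a) = add (opp a) a) by (rewrite Haa; reflexivity).
  rewrite addA, addNg, add0g in E. exact E.
Qed.

Lemma hom_zero (G H : preOrdGrp) (f : G -> H) : is_hom G H f -> f zero = zero.
Proof.
  intros [Hadd _]. apply idempotent_is_zero.
  rewrite <- Hadd, add0g. reflexivity.
Qed.

Lemma unital_hom_abelian (X : preOrdGrp) (phi : prod_pog X X -> X) :
  is_hom (prod_pog X X) X phi ->
  (forall x : X, phi (lX X x) = x) ->
  (forall x : X, phi (rX X x) = x) ->
  abelian X.
Proof.
  intros [Hadd _] Hl Hr x y.
  assert (Hxy : phi (x, y) = add x y).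
  { pose proof (Hadd (lX X x) (rX X y)) as H. simpl in H.
    rewrite addg0, add0g, Hl, Hr in H. exact H. }
  assert (Hyx : phi (x, y) = add y x).
  { pose proof (Hadd (rX X y) (lX X x)) as H. simpl in H.
    rewrite addg0, add0g, Hl, Hr in H. exact H. }
  rewrite <- Hxy, Hyx. reflexivity.
Qed.

Definition sum_map (X : preOrdGrp) (u : prod_pog X X) : X := add (fst u) (snd u).

Lemma sum_map_hom (X : preOrdGrp) : abelian X -> is_hom (prod_pog X X) X (sum_map X).
Proof.
  intros Hab. split.
  - intros [a b] [c d]. unfold sum_map; simpl.
    rewrite <- !addA. f_equal. rewrite !addA. f_equal. apply Hab.
  - intros [a b] [Ha Hb]. apply posD; assumption.
Qed.

Lemma commutative_object_abelian (X : preOrdGrp) :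
  commutative_object X <-> abelian X.
Proof.
  split.
  - intros [phi [Hphi [Hl Hr]]]. exact (unital_hom_abelian X phi Hphi Hl Hr).
  - intros Hab. exists (sum_map X). split; [apply sum_map_hom; exact Hab |].
    split; intros x; [apply addg0 | apply add0g].
Qed.

Lemma ComMon_object_commutative_object (X : preOrdGrp) :
  is_ComMon_object X -> commutative_object X.
Proof.
  intros [m [e [Hm [He [_ [Hel [Her _]]]]]]].
  pose proof (hom_zero unit_pog X e He) as He0. simpl in He0.
  exists m. split; [exact Hm |].
  split; intros x; [rewrite <- Her | rewrite <- Hel]; unfold lX, rX; rewrite He0; reflexivity.
Qed.

Lemma abelian_ComMon_object (X : preOrdGrp) : abelian X -> is_ComMon_object X.
Proof.
  intros Hab. exists (sum_map X), (fun _ => zero). unfold sum_map.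
  split; [exact (sum_map_hom X Hab) |].
  split; [split; [intros; simpl; rewrite addg0; reflexivity | intros; apply pos0] |].
  split; [intros; simpl; apply eq_sym, addA |].
  split; [intros; apply add0g |].
  split; [intros; apply addg0 |].
  intros; apply Hab.
Qed.

Theorem proposition3p6 :
  forall X : preOrdGrp,
    (commutative_object X <-> abelian X) /\
    (is_ComMon_object X <-> abelian X).
Proof.
  intros X. split.
  - apply commutative_object_abelian.
  - split.
    + intros HX. apply commutative_object_abelian, ComMon_object_commutative_object, HX.
    + apply abelian_ComMon_object.
Qed.
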